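(* Let $\mathcal H_\mathrm{S},\mathcal H_\mathrm{M},\mathcal H_\mathrm{R}$ be finite-dimensional Hilbert spaces, $\mathcal H_\mathrm{R}=\sum_r E_r|r\rangle\langle r|$ a reservoir Hamiltonian with orthonormal eigenbasis $\{|r\rangle\}$, $\beta>0$, $P_r=e^{-\beta E_r}/\sum_{s}e^{-\beta E_s}$ and $\rho^\mathrm{i}_\mathrm{R}=\sum_r P_r|r\rangle\langle r|$. Let $\rho^\mathrm{i}_\mathrm{SM}$ be a positive definite density operator on $\mathcal H_\mathrm{S}\otimes\mathcal H_\mathrm{M}$, $U_\mathrm{SR}$ a unitary on $\mathcal H_\mathrm{S}\otimes\mathcal H_\mathrm{R}$, $U=U_\mathrm{SR}\otimes 1_\mathrm{M}$, and $\rho^\mathrm{f}_\mathrm{SM}=\mathrm{Tr}_\mathrm{R}[U(\rho^\mathrm{i}_\mathrm{SM}\otimes\rho^\mathrm{i}_\mathrm{R})U^\dagger]$. Fix spectral decompositions $\rho^\mathrm{i}_\mathrm{SM}=\sum_n P_n|n\rangle\langle n|$ and $\rho^\mathrm{f}_\mathrm{SM}=\sum_{n'}\tilde P_{n'}|n'\rangle\langle n'|$ (orthonormal eigenbases). For a trajectory $\gamma=(n,r,n',r')$ define $P_\mathrm{F}[\gamma]=|\langle n',r'|U|n,r\rangle|^2P_nP_r$ and the stochastic conditional entropy production $\sigma_\mathrm{S|M}(\gamma)=-\ln\tilde P_{n'}+\ln P_n+\beta(E_{r'}-E_r)$. Then $$\langle e^{-\sigma_\mathrm{S|M}}\rangl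e:=\sum_{\gamma:\,P_\mathrm{F}[\gamma]>0}P_\mathrm{F}[\gamma]\,e^{-\sigma_\mathrm{S|M}(\gamma)}=1.$$
   Context: The trajectories correspond to a two-point projective measurement in the joint eigenbasis of the system–memory state (initial and final) and in the energy eigenbasis of the reservoir, with the memory not evolving. The convention $e^{-\infty}=0$ is used if $\tilde P_{n'}=0$. In the paper, $\sigma_\mathrm{S|M}$ is written as $\Delta s_\mathrm{S|M}+\beta q_\mathrm{R}$ with $\Delta s_\mathrm{S|M}=-\ln(\tilde P_{n'}/P_b)+\ln(P_n/P_b)$ ($P_b$ eigenvalues of $\rho^\mathrm{i}_\mathrm{M}$, which cancel) and $q_\mathrm{R}=E_{r'}-E_r$. *)

From HB Require Import structures.
From mathcomp Require Import all_boot all_order all_algebra.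
From mathcomp Require Import reals.
From mathcomp.analysis Require Import sequences exp.
From mathcomp Require Import complex mxtens.
Set Implicit Arguments. Unset Strict Implicit. Unset Printing Implicit Defensive.
Import Order.TTheory GRing.Theory Num.Theory.
Local Open Scope ring_scope.
Local Open Scope complex_scope.

Section QuantumDefs.
Variable R : realType.
Local Notation C := R[i].

Definition dagger {m n} (A : 'M[C]_(m, n)) : 'M[C]_(n, m) := (map_mx Num.conj A)^T.

Definition unitary {n} (A : 'M[C]_n) : Prop := dagger A *m A = 1%:M.

Definition hermitian {n} (A : 'M[C]_n) : Prop := dagger A = A.

Definition posdef {n} (A : 'M[C]_n) : Prop :=
  hermitian A /\ forall x : 'cV[C]_n, x != 0 -> 0 < \tr (dagger x *m A *m x).

Definition posdef_density {n} (A : 'M[C]_n) : Prop := posdef A /\ \tr A = 1.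

Definition rdiag {n} (p : 'I_n -> R) : 'M[C]_n := diag_mx (\row_k (p k)%:C).

Definition gibbs {r} (beta : R) (E : 'I_r -> R) (k : 'I_r) : R :=
  expR (- (beta * E k)) / \sum_(l < r) expR (- (beta * E l)).

(* rho_R = sum_r P_r |r><r|, with |r> the k-th column of the unitary Q *)
Definition gibbs_state {r} (beta : R) (E : 'I_r -> R) (Q : 'M[C]_r) : 'M[C]_r :=
  Q *m rdiag (gibbs beta E) *m dagger Q.

(* The space H_S (x) H_M (x) H_R is represented as 'I_(s*m*r) via mxtens
   indexing ((a, mu), rho).  The operator U_SR (x) 1_M naturally acts on
   'I_(s*r*m) ((a, rho), mu); [swapRM] is the permutation (unitary)
   identifying the two orderings. *)
Definition swapRM (s m r : nat) : 'M[C]_(s * m * r, s * r * m) :=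
  \matrix_(i, j)
    (let: (sm, rr) := mxtens_unindex i in
     let: (a, mu) := mxtens_unindex sm in
     let: (sr, mu') := mxtens_unindex j in
     let: (a', rr') := mxtens_unindex sr in
     ((a == a') && (mu == mu') && (rr == rr'))%:R).

Definition liftU {s r : nat} (m : nat) (U_SR : 'M[C]_(s * r)) : 'M[C]_(s * m * r) :=
  swapRM s m r *m (tensmx U_SR (1%:M : 'M[C]_m)) *m (swapRM s m r)^T.

Definition ptrace2 {a b} (A : 'M[C]_(a * b)) : 'M[C]_a :=
  \matrix_(i, j) \sum_(k < b) A (mxtens_index (i, k)) (mxtens_index (j, k)).

Definition final_state {s m r : nat} (U_SR : 'M[C]_(s * r))
  (rhoSM : 'M[C]_(s * m)) (rhoR : 'M[C]_r) : 'M[C]_(s * m) :=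
  ptrace2 (liftU m U_SR *m tensmx rhoSM rhoR *m dagger (liftU m U_SR)) : 'M[C]_(s * m).

(* transition amplitude <n', r'| U |n, r> ; the 1x1 matrix is read off by its trace *)
Definition amplitude {s m r : nat} (U_SR : 'M[C]_(s * r))
  (V W : 'M[C]_(s * m)) (Q : 'M[C]_r) (n : 'I_(s * m)) (k : 'I_r)
  (n' : 'I_(s * m)) (k' : 'I_r) : C :=
  \tr (dagger (tensmx (col n' W) (col k' Q)) *m liftU m U_SR
         *m tensmx (col n V) (col k Q)).

Definition sqmod (z : C) : R := let: a +i* b := z in a ^+ 2 + b ^+ 2.

Definition PF {s m r : nat} (beta : R) (E : 'I_r -> R) (Q : 'M[C]_r)
  (U_SR : 'M[C]_(s * r)) (V W : 'M[C]_(s * m)) (Pn : 'I_(s * m) -> R)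
  (n : 'I_(s * m)) (k : 'I_r) (n' : 'I_(s * m)) (k' : 'I_r) : R :=
  sqmod (amplitude U_SR V W Q n k n' k') * Pn n * gibbs beta E k.

Definition sigmaSM {s m r : nat} (beta : R) (E : 'I_r -> R)
  (Pn Pt : 'I_(s * m) -> R) (n : 'I_(s * m)) (k : 'I_r) (n' : 'I_(s * m)) (k' : 'I_r) : R :=
  - ln (Pt n') + ln (Pn n) + beta * (E k' - E k).

(* e^{-sigma}, with the convention e^{-infty} = 0 when Pt_{n'} = 0 *)
Definition exp_neg_sigma {s m r : nat} (beta : R) (E : 'I_r -> R)
  (Pn Pt : 'I_(s * m) -> R) (n : 'I_(s * m)) (k : 'I_r) (n' : 'I_(s * m)) (k' : 'I_r) : R :=
  if Pt n' == 0 then 0 else expR (- sigmaSM beta E Pn Pt n k n' k').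

End QuantumDefs.

From HB Require Import structures.
From mathcomp Require Import all_boot all_order all_algebra.
From mathcomp Require Import reals ring.
From mathcomp.analysis Require Import sequences exp.
From mathcomp Require Import complex mxtens.
Set Implicit Arguments. Unset Strict Implicit. Unset Printing Implicit Defensive.
Import Order.TTheory GRing.Theory Num.Theory.
Local Open Scope ring_scope.
Local Open Scope complex_scope.

(** In the product eigenbases [|n, r>] of the initial and [|n', r'>] of the
  final state, the amplitudes [<n', r'| U |n, r>] form a unitary matrix [M].
  Since [P_r] is a Gibbs weight, [P_n P_r e^{-sigma} = Pt_{n'} P_{r'}], so
  [P_F e^{-sigma} = |M_{(n',r'),(n,r)}|^2 Pt_{n'} P_{r'}].  Summing first over
  [(n, r)] uses that the rows of [M] have unit norm, and what is left is
  [sum Pt_{n'} * sum P_{r'} = Tr rho^f * 1 = 1] because the dynamics preserves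
  the trace.  Two positivity facts make this work: [P_n > 0] (so [P_F = 0]
  forces [M_{(n',r'),(n,r)} = 0]) and [Pt_{n'} >= 0] (so [ln Pt_{n'}] is
  meaningful), the latter because a partial trace of a positive
  semidefinite operator is positive semidefinite. *)

Lemma sum_mxtens_index (T : nmodType) a b (F : 'I_(a * b) -> T) :
  \sum_(j < a * b) F j = \sum_(i < a) \sum_(k < b) F (mxtens_index (i, k)).
Proof.
rewrite pair_big /= (reindex (@mxtens_index a b)) /=.
  by apply: eq_bigr => -[i k].
by exists (@mxtens_unindex a b) => x _; rewrite (mxtens_indexK, mxtens_unindexK).
Qed.

Lemma sum_mulrn_eq (T : nmodType) n (x : 'I_n) (F : 'I_n -> T) :
  \sum_(i < n) F i *+ (i == x) = F x.
Proof.
rewrite (bigD1 x) //= eqxx mulr1n big1 ?addr0 // => i /negbTE ->.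
by rewrite mulr0n.
Qed.

Lemma tensmx11 (T : comPzRingType) a b :
  (1%:M : 'M[T]_a) *t (1%:M : 'M[T]_b) = 1%:M.
Proof.
apply/matrixP => i j.
case: (mxtens_indexP i) => i1 i2; case: (mxtens_indexP j) => j1 j2.
by rewrite tensmxE !mxE -natrM mulnb (can_eq (@mxtens_indexK a b)) xpair_eqE.
Qed.

Lemma tens_col (T : pzRingType) a b c d (A : 'M[T]_(a, b)) (B : 'M[T]_(c, d)) i k :
  col i A *t col k B = col (mxtens_index (i, k)) (A *t B).
Proof.
apply/matrixP => p q; case: (mxtens_indexP p) => p1 p2.
by rewrite !mxE !mxtens_indexK.
Qed.

Section IndexMatrix.
Variable T : pzSemiRingType.

Definition index_mx p q (f : 'I_q -> 'I_p) : 'M[T]_(p, q) :=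
  \matrix_(i, j) (i == f j)%:R.

Lemma index_mx_sandwichE p q p' q' (f : 'I_q -> 'I_p) (g : 'I_q' -> 'I_p')
    (A : 'M[T]_(p, p')) i j :
  ((index_mx f)^T *m A *m index_mx g) i j = A (f i) (g j).
Proof.
rewrite mxE; under eq_bigr do rewrite [X in _ * X]mxE mulr_natr.
rewrite sum_mulrn_eq mxE; under eq_bigr do rewrite !mxE mulr_natl.
exact: sum_mulrn_eq.
Qed.

Lemma index_mx_trmxK p q (f : 'I_q -> 'I_p) :
  injective f -> (index_mx f)^T *m index_mx f = 1%:M.
Proof.
move=> f_inj; apply/matrixP => i j.
by rewrite -[(index_mx f)^T]mulmx1 index_mx_sandwichE !mxE (inj_eq f_inj).
Qed.

Lemma index_mxK p q (f : 'I_q -> 'I_p) g :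
  cancel f g -> cancel g f -> index_mx f *m (index_mx f)^T = 1%:M.
Proof.
move=> fK gK; apply/matrixP => i i'; rewrite !mxE.
under eq_bigr => j _ do rewrite !mxE -{1}(gK i) (can_eq fK) eq_sym mulr_natl.
by rewrite sum_mulrn_eq gK eq_sym.
Qed.

End IndexMatrix.

Section ConjugateTranspose.
Variable R : realType.
Local Notation C := R[i].

Lemma dagger_mul m n p (A : 'M[C]_(m, n)) (B : 'M[C]_(n, p)) :
  dagger (A *m B) = dagger B *m dagger A.
Proof. by rewrite /dagger map_mxM trmx_mul. Qed.

Lemma daggerK m n (A : 'M[C]_(m, n)) : dagger (dagger A) = A.
Proof. by apply/matrixP => i j; rewrite /dagger !mxE conjCK. Qed.

Lemma dagger_tens m n p q (A : 'M[C]_(m, n)) (B : 'M[C]_(p, q)) :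
  dagger (A *t B) = dagger A *t dagger B.
Proof. by apply/matrixP => i j; rewrite /dagger !mxE rmorphM. Qed.

Lemma dagger_index_mx p q (f : 'I_q -> 'I_p) :
  dagger (index_mx C f) = (index_mx C f)^T.
Proof. by apply/matrixP => i j; rewrite /dagger !mxE rmorph_nat. Qed.

Lemma dagger1 n : dagger (1%:M : 'M[C]_n) = 1%:M.
Proof. by apply/matrixP => i j; rewrite /dagger !mxE rmorphMn rmorph1 eq_sym. Qed.

Lemma unitaryC n (A : 'M[C]_n) : unitary A -> A *m dagger A = 1%:M.
Proof. exact: mulmx1C. Qed.

Lemma unitary_dagger n (A : 'M[C]_n) : unitary A -> unitary (dagger A).
Proof. by move=> /unitaryC; rewrite /unitary daggerK. Qed.

Lemma unitary_mul n (A B : 'M[C]_n) : unitary A -> unitary B -> unitary (A *m B).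
Proof.
rewrite /unitary dagger_mul => uA uB.
by rewrite mulmxA -(mulmxA _ _ A) uA mulmx1.
Qed.

Lemma unitary_tens a b (A : 'M[C]_a) (B : 'M[C]_b) :
  unitary A -> unitary B -> unitary (A *t B).
Proof. by rewrite /unitary dagger_tens tensmx_mul => -> ->; rewrite tensmx11. Qed.

Lemma unitary_isometry_conj p q (X : 'M[C]_(p, q)) (Y : 'M[C]_q) :
  dagger X *m X = 1%:M -> X *m dagger X = 1%:M -> unitary Y ->
  unitary (X *m Y *m dagger X).
Proof.
move=> XX XX' uY; rewrite /unitary !dagger_mul daggerK !mulmxA.
by rewrite -(mulmxA _ _ X) XX mulmx1 -(mulmxA _ _ Y) uY mulmx1 XX'.
Qed.

Lemma sqmodE (z : C) : (sqmod z)%:C = z * Num.conj z.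
Proof. by rewrite -normCK -add_Re2_Im2; case: z. Qed.

Lemma sqmod_ge0 (z : C) : 0 <= sqmod z.
Proof. by case: z => a b /=; rewrite addr_ge0 // sqr_ge0. Qed.

Lemma sum_sqmod_row n (M : 'M[C]_n) i : unitary M -> \sum_j sqmod (M i j) = 1.
Proof.
move=> /unitaryC /matrixP /(_ i i); rewrite !mxE eqxx mulr1n => MM.
apply: (@complexI R); rewrite rmorph_sum rmorph1 -MM.
by apply: eq_bigr => j _; rewrite /= sqmodE /dagger !mxE.
Qed.

End ConjugateTranspose.

Section Lift.
Variables (R : realType) (s m r : nat).

Definition swap_index (j : 'I_(s * r * m)) : 'I_(s * m * r) :=
  let: (sr, mu) := mxtens_unindex j in let: (a, k) := mxtens_unindex sr in
  mxtens_index (mxtens_index (a, mu), k).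

Definition unswap_index (i : 'I_(s * m * r)) : 'I_(s * r * m) :=
  let: (sm, k) := mxtens_unindex i in let: (a, mu) := mxtens_unindex sm in
  mxtens_index (mxtens_index (a, k), mu).

Lemma swap_indexK : cancel swap_index unswap_index.
Proof.
move=> j; case: (mxtens_indexP j) => sr mu; case: (mxtens_indexP sr) => a k.
by rewrite /swap_index /unswap_index !mxtens_indexK.
Qed.

Lemma unswap_indexK : cancel unswap_index swap_index.
Proof.
move=> i; case: (mxtens_indexP i) => sm k; case: (mxtens_indexP sm) => a mu.
by rewrite /swap_index /unswap_index !mxtens_indexK.
Qed.

Lemma swapRM_index_mx : swapRM R s m r = index_mx R[i] swap_index.
Proof.
apply/matrixP => i j; rewrite !mxE.
case: (mxtens_indexP i) => sm k; case: (mxtens_indexP sm) => a mu.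
case: (mxtens_indexP j) => sr mu'; case: (mxtens_indexP sr) => a' k'.
rewrite /swap_index !mxtens_indexK /= (can_eq (@mxtens_indexK _ _)) xpair_eqE.
by rewrite (can_eq (@mxtens_indexK _ _)) xpair_eqE.
Qed.

Lemma liftU_unitary (U : 'M[R[i]]_(s * r)) : unitary U -> unitary (liftU m U).
Proof.
move=> uU; rewrite /liftU swapRM_index_mx -dagger_index_mx.
apply: unitary_isometry_conj.
- by rewrite dagger_index_mx index_mx_trmxK //; exact: can_inj swap_indexK.
- by rewrite dagger_index_mx (index_mxK _ swap_indexK unswap_indexK).
- by rewrite /unitary dagger_tens dagger1 tensmx_mul uU mul1mx tensmx11.
Qed.

End Lift.

Section Positivity.
Variable R : realType.
Local Notation C := R[i].

Definition psd n (A : 'M[C]_n) : Prop :=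
  forall x : 'cV[C]_n, 0 <= \tr (dagger x *m A *m x).

Lemma psd_conj p n (Y : 'M[C]_(p, n)) (A : 'M[C]_n) :
  psd A -> psd (Y *m A *m dagger Y).
Proof.
move=> psdA x; have := psdA (dagger Y *m x).
by rewrite dagger_mul daggerK !mulmxA.
Qed.

Lemma psd_sum n (I : finType) (A : I -> 'M[C]_n) :
  (forall i, psd (A i)) -> psd (\sum_i A i).
Proof.
move=> psdA x; rewrite mulmx_sumr mulmx_suml raddf_sum.
by apply: sumr_ge0 => i _; exact: psdA.
Qed.

Lemma psd_rdiag n (p : 'I_n -> R) : (forall j, 0 <= p j) -> psd (rdiag p).
Proof.
move=> p_ge0 x; rewrite /rdiag mul_mx_diag trace_mx11 mxE.
apply: sumr_ge0 => j _; rewrite !mxE mulrAC.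
by rewrite mulr_ge0 ?lecR // mulrC mul_conjC_ge0.
Qed.

Lemma ptrace2_index_mx a b (A : 'M[C]_(a * b)) :
  ptrace2 A = \sum_(k < b) dagger (index_mx C (fun i => mxtens_index (i, k)))
                            *m A *m index_mx C (fun i => mxtens_index (i, k)).
Proof.
apply/matrixP => i j; rewrite !mxE summxE.
by apply: eq_bigr => k _; rewrite dagger_index_mx index_mx_sandwichE.
Qed.

Lemma psd_ptrace2 a b (A : 'M[C]_(a * b)) : psd A -> psd (ptrace2 A).
Proof.
move=> psdA; rewrite ptrace2_index_mx; apply: psd_sum => k.
by rewrite -[X in _ *m X]daggerK; exact: psd_conj.
Qed.

End Positivity.

Section Spectrum.
Variable R : realType.
Local Notation C := R[i].

Lemma mxtrace_col_sandwich a b c d (X : 'M[C]_(a, b)) (Y : 'M[C]_(a, c))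
    (Z : 'M[C]_(c, d)) j i :
  \tr (dagger (col j X) *m Y *m col i Z) = (dagger X *m Y *m Z) j i.
Proof.
rewrite trace_mx11 !mxE; apply: eq_bigr => k _; rewrite !mxE; congr (_ * _).
by apply: eq_bigr => l _; rewrite !mxE.
Qed.

Lemma col_unitary_neq0 n (V : 'M[C]_n) j : unitary V -> col j V != 0.
Proof.
move=> uV; apply/eqP => Vj0.
have := mxtrace_col_sandwich V 1%:M V j j.
by rewrite !mulmx1 uV Vj0 mulmx0 mxtrace0 mxE eqxx => /eqP; rewrite eq_sym oner_eq0.
Qed.

Lemma eigenvalueE n (V A : 'M[C]_n) (p : 'I_n -> R) j :
  unitary V -> A = V *m rdiag p *m dagger V ->
  (p j)%:C = \tr (dagger (col j V) *m A *m col j V).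
Proof.
move=> uV ->; rewrite mxtrace_col_sandwich !mulmxA uV mul1mx -mulmxA uV mulmx1.
by rewrite !mxE eqxx mulr1n.
Qed.

Lemma posdef_eigenvalue_gt0 n (V A : 'M[C]_n) (p : 'I_n -> R) j :
  unitary V -> A = V *m rdiag p *m dagger V -> posdef A -> 0 < p j.
Proof.
move=> uV AE [_ A_pos]; rewrite -ltcR (eigenvalueE j uV AE).
exact/A_pos/col_unitary_neq0.
Qed.

Lemma psd_eigenvalue_ge0 n (V A : 'M[C]_n) (p : 'I_n -> R) j :
  unitary V -> A = V *m rdiag p *m dagger V -> psd A -> 0 <= p j.
Proof. by move=> uV AE A_psd; rewrite -lecR (eigenvalueE j uV AE). Qed.

Lemma mxtrace_unitary_conj n (X A : 'M[C]_n) :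
  unitary X -> \tr (X *m A *m dagger X) = \tr A.
Proof. by move=> uX; rewrite mxtrace_mulC mulmxA uX mul1mx. Qed.

Lemma mxtrace_rdiag n (p : 'I_n -> R) : \tr (rdiag p) = (\sum_k p k)%:C.
Proof. by rewrite mxtrace_diag rmorph_sum; apply: eq_bigr => k _; rewrite mxE. Qed.

Lemma sum_eigenvalues n (V A : 'M[C]_n) (p : 'I_n -> R) :
  unitary V -> A = V *m rdiag p *m dagger V -> (\sum_k p k)%:C = \tr A.
Proof. by move=> uV ->; rewrite mxtrace_unitary_conj // mxtrace_rdiag. Qed.

End Spectrum.

Section Dynamics.
Variable R : realType.
Local Notation C := R[i].

Lemma mxtrace_ptrace2 a b (A : 'M[C]_(a * b)) : \tr (ptrace2 A) = \tr A.
Proof. by rewrite /mxtrace sum_mxtens_index; apply: eq_bigr => i _; rewrite mxE. Qed.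

Lemma mxtrace_tens a b (A : 'M[C]_a) (B : 'M[C]_b) : \tr (A *t B) = \tr A * \tr B.
Proof.
rewrite /mxtrace sum_mxtens_index mulr_suml; apply: eq_bigr => i _.
by rewrite mulr_sumr; apply: eq_bigr => k _; rewrite tensmxE.
Qed.

Lemma rdiag_tens a b (p : 'I_a -> R) (q : 'I_b -> R) :
  rdiag p *t rdiag q
  = rdiag (fun j => p (mxtens_unindex j).1 * q (mxtens_unindex j).2).
Proof.
apply/matrixP => i j.
case: (mxtens_indexP i) => i1 i2; case: (mxtens_indexP j) => j1 j2.
rewrite tensmxE !mxE !mxtens_indexK (can_eq (@mxtens_indexK a b)) xpair_eqE.
by case: eqP; case: eqP; rewrite ?mulr0n ?mulr0 ?mul0r //= !mulr1n rmorphM.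
Qed.

Lemma tens_eigendecomposition a b (V A : 'M[C]_a) (Q B : 'M[C]_b) p q :
  A = V *m rdiag p *m dagger V -> B = Q *m rdiag q *m dagger Q ->
  A *t B = (V *t Q) *m
    rdiag (fun j => p (mxtens_unindex j).1 * q (mxtens_unindex j).2)
    *m dagger (V *t Q).
Proof. by move=> -> ->; rewrite dagger_tens -rdiag_tens !tensmx_mul. Qed.

Variables s m r : nat.
Implicit Types (U : 'M[C]_(s * r)) (A : 'M[C]_(s * m)) (B : 'M[C]_r).

Lemma mxtrace_final_state U A B :
  unitary U -> \tr (final_state U A B) = \tr A * \tr B.
Proof.
move=> uU; rewrite /final_state mxtrace_ptrace2 mxtrace_unitary_conj ?mxtrace_tens //.
exact: liftU_unitary.
Qed.

Lemma psd_final_state U A B : psd (A *t B) -> psd (final_state U A B).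
Proof. by move=> psdAB; apply/psd_ptrace2/psd_conj. Qed.

End Dynamics.

Lemma sum_unitary_weights (R : realType) a b (M : 'M[R[i]]_(a * b))
    (p : 'I_a -> R) (q : 'I_b -> R) :
  unitary M ->
  \sum_(n < a) \sum_(k < b) \sum_(n' < a) \sum_(k' < b)
     sqmod (M (mxtens_index (n', k')) (mxtens_index (n, k))) * (p n' * q k')
  = (\sum_n p n) * (\sum_k q k).
Proof.
move=> uM; pose w j := p (mxtens_unindex j).1 * q (mxtens_unindex j).2.
transitivity (\sum_j \sum_j' sqmod (M j' j) * w j').
  rewrite sum_mxtens_index; apply: eq_bigr => n _; apply: eq_bigr => k _.
  rewrite sum_mxtens_index; apply: eq_bigr => n' _; apply: eq_bigr => k' _.
  by rewrite /w mxtens_indexK.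
rewrite exchange_big mulr_sum; apply: eq_bigr => j' _.
by rewrite -mulr_suml sum_sqmod_row // mul1r.
Qed.

Section Gibbs.
Variables (R : realType) (r : nat) (beta : R) (E : 'I_r -> R).

Lemma partition_function_gt0 (k : 'I_r) : 0 < \sum_(l < r) expR (- (beta * E l)).
Proof.
rewrite (bigD1 k) //=; apply: (lt_le_trans (expR_gt0 (- (beta * E k)))).
by rewrite lerDl sumr_ge0 // => l _; exact: expR_ge0.
Qed.

Lemma gibbs_gt0 k : 0 < gibbs beta E k.
Proof. by rewrite divr_gt0 ?expR_gt0 ?(partition_function_gt0 k). Qed.

Lemma sum_gibbs : (0 < r)%N -> \sum_k gibbs beta E k = 1.
Proof.
move=> r_gt0; rewrite /gibbs -mulr_suml divff //.
by rewrite lt0r_neq0 ?(partition_function_gt0 (Ordinal r_gt0)).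
Qed.

Lemma gibbs_exp_neg_sigma s m (Pn Pt : 'I_(s * m) -> R) n k n' k' :
  0 < Pn n -> 0 <= Pt n' ->
  Pn n * gibbs beta E k * exp_neg_sigma beta E Pn Pt n k n' k'
  = Pt n' * gibbs beta E k'.
Proof.
move=> Pn_gt0 Pt_ge0; rewrite /exp_neg_sigma.
have [->|Pt_neq0] := eqVneq (Pt n') 0; first by rewrite mulr0 !mul0r.
have Pt_gt0 : 0 < Pt n' by rewrite lt_def Pt_neq0.
have balance : expR (- sigmaSM beta E Pn Pt n k n' k') * Pn n * expR (- (beta * E k))
               = Pt n' * expR (- (beta * E k')).
  rewrite -[Pn n]lnK ?posrE // -[Pt n']lnK ?posrE // -!expRD.
  by congr expR; rewrite /sigmaSM; ring.
by rewrite /gibbs !mulrA -balance; ring.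
Qed.

End Gibbs.

Section Trajectories.
Variables (R : realType) (s m r : nat) (beta : R) (E : 'I_r -> R).
Variables (Q : 'M[R[i]]_r) (U_SR : 'M[R[i]]_(s * r)) (V W : 'M[R[i]]_(s * m)).
Variables Pn Pt : 'I_(s * m) -> R.

Definition transition_mx : 'M[R[i]]_(s * m * r) :=
  dagger (W *t Q) *m liftU m U_SR *m (V *t Q).

Lemma amplitudeE n k n' k' :
  amplitude U_SR V W Q n k n' k'
  = transition_mx (mxtens_index (n', k')) (mxtens_index (n, k)).
Proof. by rewrite /amplitude !tens_col mxtrace_col_sandwich. Qed.

Lemma transition_mx_unitary :
  unitary Q -> unitary U_SR -> unitary V -> unitary W -> unitary transition_mx.
Proof.
move=> uQ uU uV uW.
apply: unitary_mul; last exact: unitary_tens.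
apply: unitary_mul; first exact/unitary_dagger/unitary_tens.
exact: liftU_unitary.
Qed.

Lemma PF_exp_neg_sigma n k n' k' :
  0 < Pn n -> 0 <= Pt n' ->
  (if 0 < PF beta E Q U_SR V W Pn n k n' k'
   then PF beta E Q U_SR V W Pn n k n' k' * exp_neg_sigma beta E Pn Pt n k n' k'
   else 0)
  = sqmod (amplitude U_SR V W Q n k n' k') * (Pt n' * gibbs beta E k').
Proof.
move=> Pn_gt0 Pt_ge0; rewrite /PF -!(mulrA (sqmod _)).
case: ifP => [_|]; first by rewrite gibbs_exp_neg_sigma.
rewrite (pmulr_lgt0 _ (mulr_gt0 Pn_gt0 (gibbs_gt0 beta E k))) lt_def sqmod_ge0 andbT.
by move=> /negbFE/eqP ->; rewrite !mul0r.
Qed.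

End Trajectories.

Theorem theorem4 (R : realType) (s m r : nat) (beta : R)
  (E : 'I_r -> R) (Q : 'M[R[i]]_r)
  (rho_i : 'M[R[i]]_(s * m)) (U_SR : 'M[R[i]]_(s * r))
  (V : 'M[R[i]]_(s * m)) (Pn : 'I_(s * m) -> R)
  (W : 'M[R[i]]_(s * m)) (Pt : 'I_(s * m) -> R) :
  (0 < r)%N ->
  0 < beta ->
  unitary Q ->
  posdef_density rho_i ->
  unitary U_SR ->
  unitary V -> rho_i = V *m rdiag Pn *m dagger V ->
  unitary W ->
  final_state U_SR rho_i (gibbs_state beta E Q) = W *m rdiag Pt *m dagger W ->
  \sum_(n < s * m) \sum_(k < r) \sum_(n' < s * m) \sum_(k' < r)
     (if 0 < PF beta E Q U_SR V W Pn n k n' k'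
      then PF beta E Q U_SR V W Pn n k n' k' * exp_neg_sigma beta E Pn Pt n k n' k'
      else 0) = 1.
Proof.
move=> r_gt0 _ uQ [rho_i_posdef tr_rho_i] uU uV rho_iE uW rho_fE.
have Pn_gt0 n : 0 < Pn n := posdef_eigenvalue_gt0 n uV rho_iE rho_i_posdef.
have rho_tensE := tens_eigendecomposition rho_iE (erefl (gibbs_state beta E Q)).
have rho_tens_psd : psd (rho_i *t gibbs_state beta E Q).
  rewrite rho_tensE; apply/psd_conj/psd_rdiag => j.
  by rewrite mulr_ge0 ?ltW ?gibbs_gt0.
have Pt_ge0 n' : 0 <= Pt n'.
  exact: psd_eigenvalue_ge0 uW rho_fE (psd_final_state _ rho_tens_psd).
have sum_Pt : \sum_(n' < s * m) Pt n' = 1.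
  apply: (@complexI R); rewrite (sum_eigenvalues uW rho_fE) mxtrace_final_state //.
  by rewrite tr_rho_i mul1r mxtrace_unitary_conj // mxtrace_rdiag sum_gibbs.
transitivity (\sum_n \sum_k \sum_n' \sum_k'
  sqmod (transition_mx Q U_SR V W (mxtens_index (n', k')) (mxtens_index (n, k)))
  * (Pt n' * gibbs beta E k')).
  apply: eq_bigr => n _; apply: eq_bigr => k _; apply: eq_bigr => n' _.
  by apply: eq_bigr => k' _; rewrite PF_exp_neg_sigma // amplitudeE.
rewrite sum_unitary_weights ?sum_Pt ?sum_gibbs ?mulr1 //.
exact: transition_mx_unitary.
Qed.
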